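(* Assume Gompertzian growth, $\phi(x)=b\ln(X_\infty/x)$ with $b>0$ and $X_\infty>0$, and let $x(t)=X_0^{e^{-bt}}X_\infty^{1-e^{-bt}}$ be the untreated tumor trajectory starting from $x(0)=X_0>0$. Then for any doses $d_0,\dots,d_{N-1}\ge0$ and every $i=0,1,\dots,N-1$, $$Y_i^+=\frac{1}{\alpha_T}\ln\big(x(i)\big)-\sum_{k=0}^{i}e^{-b(i-k)}\,\mathrm{BED}_T(d_k).$$ Consequently, minimizing $Y_{N-1}^+$ subject to $\sum_{k=0}^{N-1}\mathrm{BED}_O(d_k)\le c$ is equivalent to maximizing $\sum_{k=0}^{N-1}e^{-b(N-1-k)}\mathrm{BED}_T(d_k)$ subject to the same constraint.
   Context: Tumor parameters $\alpha_T>0$, $\beta_T>0$, $[\alpha/\beta]_T=\alpha_T/\beta_T$; $\mathrm{BED}_T(d)=d\left(1+\frac{d}{[\alpha/\beta]_T}\right)$; OAR parameters $[\alpha/\beta]_O>0$, $0<\gamma<1$, $c>0$, and $\mathrm{BED}_O(d)=\gamma d\left(1+\frac{\gamma d}{[\alpha/\beta]_O}\right)$. Tumor growth between doses follows $\frac{1}{x}\frac{dx}{dt}=\phi(x)$. Doses are delivered at integer times $0,\dots,N-1$. With $Y=\ln(\text{number of tumor cells})/\alpha_T$, let $F$ be the one-day growth map for $Y$ under the ODE; $Y_0^-=\ln(X_0)/\alpha_T$, $Y_0^+=Y_0^--\mathrm{BED}_T(d_0)$, and $Y_{i+1}^+=F(Y_i^+)-\mathrm{BED}_T(d_{i+1})$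 for $i=0,\dots,N-2$. *)

From Stdlib Require Import Reals Lra Lia.
From Coquelicot Require Import Coquelicot.
Open Scope R_scope.

Definition BED_T (alphaT betaT d : R) : R := d * (1 + d / (alphaT / betaT)).
Definition BED_O (abO gamma d : R) : R :=
  gamma * d * (1 + gamma * d / abO).

Definition gompertz_phi (b Xinf x : R) : R := b * ln (Xinf / x).

Definition is_one_day_flow (phi : R -> R) (flow : R -> R -> R) : Prop :=
  forall x0, 0 < x0 ->
    flow x0 0 = x0 /\
    forall t, 0 <= t <= 1 ->
      0 < flow x0 t /\ is_derive (flow x0) t (flow x0 t * phi (flow x0 t)).

(* One-day growth map for Y = ln(number of cells)/alphaT *)
Definition growth_map (alphaT : R) (flow : R -> R -> R) (y : R) : R :=
  ln (flow (exp (alphaT * y)) 1) / alphaT.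

Fixpoint Yplus (alphaT betaT X0 : R) (F : R -> R) (d : nat -> R) (i : nat)
  : R :=
  match i with
  | O => ln X0 / alphaT - BED_T alphaT betaT (d O)
  | S j => F (Yplus alphaT betaT X0 F d j) - BED_T alphaT betaT (d (S j))
  end.

Definition gompertz_traj (b X0 Xinf t : R) : R :=
  Rpower X0 (exp (- b * t)) * Rpower Xinf (1 - exp (- b * t)).

Definition feasible (N : nat) (abO gamma c : R) (d : nat -> R) : Prop :=
  (forall k, (k < N)%nat -> 0 <= d k) /\
  sum_f_R0 (fun k => BED_O abO gamma (d k)) (N - 1) <= c.

Definition disc_BED (b alphaT betaT : R) (N : nat) (d : nat -> R) : R :=
  sum_f_R0 (fun k => exp (- b * (INR (N - 1) - INR k)) * BED_T alphaT betaT (d k))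
    (N - 1).

(* Along a Gompertz solution, u = ln x - ln Xinf satisfies u' = - b u, so
   u(t) e^(bt) is constant and one day of growth multiplies u by e^(-b).  In
   the variable Y = ln x / alphaT the growth map is therefore affine with slope
   e^(-b), and unrolling the recursion for Y_i^+ discounts the dose delivered
   on day k by e^(-b(i-k)), while the dose-free part is ln x(i) / alphaT.
   Hence Y_(N-1)^+ is a constant minus the discounted tumor BED, so minimizing
   the one is maximizing the other. *)
From Stdlib Require Import Reals Lra.
From Coquelicot Require Import Coquelicot.
Open Scope R_scope.

Section GompertzSolution.

Variables (b Xinf : R) (x : R -> R).
Hypothesis HXinf : 0 < Xinf.
Hypothesis Hx : forall t, 0 <= t <= 1 ->
  0 < x t /\ is_derive x t (x t * gompertz_phi b Xinf (x t)).

Lemma is_derive_gompertz_invariant t : 0 <= t <= 1 ->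
  is_derive (fun s => (ln (x s) - ln Xinf) * exp (b * s)) t 0.
Proof.
  intros Ht; destruct (Hx t Ht) as [Hpos Hder].
  assert (Hlog : is_derive (fun s => ln (x s) - ln Xinf) t
    (x t * gompertz_phi b Xinf (x t) * / x t - 0)).
  { exact (is_derive_minus _ _ t _ _
      (is_derive_comp ln x t _ _ (is_derive_ln _ Hpos) Hder)
      (is_derive_const (ln Xinf) t)). }
  assert (Hexp : is_derive (fun s => exp (b * s)) t (b * 1 * exp (b * t))).
  { exact (is_derive_comp exp (fun s => b * s) t _ _ (is_derive_exp (b * t))
      (is_derive_scal (fun s => s) t b 1 (is_derive_id t))). }
  replace 0 with ((x t * gompertz_phi b Xinf (x t) * / x t - 0) * exp (b * t)
                  + (ln (x t) - ln Xinf) * (b * 1 * exp (b * t))).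
  - exact (is_derive_mult _ _ t _ _ Hlog Hexp (fun u v => Rmult_comm u v)).
  - unfold gompertz_phi; rewrite ln_div by auto; field; lra.
Qed.

Lemma ln_gompertz_solution_one :
  ln (x 1) = exp (- b) * ln (x 0) + (1 - exp (- b)) * ln Xinf.
Proof.
  pose (g := fun s => (ln (x s) - ln Xinf) * exp (b * s)).
  destruct (MVT_gen g 0 1 (fun _ => 0)) as [c [_ Hc]].
  - intros s Hs; rewrite Rmin_left, Rmax_right in Hs by lra.
    apply is_derive_gompertz_invariant; lra.
  - intros s Hs; rewrite Rmin_left, Rmax_right in Hs by lra.
    apply derivable_continuous_pt; exists 0; apply is_derive_Reals.
    apply is_derive_gompertz_invariant; lra.
  - unfold g in Hc; rewrite Rmult_0_r, Rmult_1_r, exp_0, Rmult_1_r in Hc.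
    assert (Hconst : ln (x 1) - ln Xinf = exp (- b) * (ln (x 0) - ln Xinf)).
    { rewrite exp_Ropp.
      apply (Rmult_eq_reg_r (exp b)); [|pose proof (exp_pos b); lra].
      field_simplify; [lra|pose proof (exp_pos b); lra]. }
    lra.
Qed.

End GompertzSolution.

Lemma growth_map_gompertz alphaT b Xinf flow y :
  0 < alphaT -> 0 < Xinf -> is_one_day_flow (gompertz_phi b Xinf) flow ->
  growth_map alphaT flow y = exp (- b) * y + (1 - exp (- b)) * ln Xinf / alphaT.
Proof.
  intros HalphaT HXinf Hflow; unfold growth_map.
  destruct (Hflow (exp (alphaT * y)) (exp_pos _)) as [H0 Hsol].
  rewrite (ln_gompertz_solution_one b Xinf _ HXinf Hsol), H0, ln_exp.
  field; lra.
Qed.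

Lemma ln_gompertz_traj b X0 Xinf t : 0 < X0 -> 0 < Xinf ->
  ln (gompertz_traj b X0 Xinf t)
  = exp (- b * t) * ln X0 + (1 - exp (- b * t)) * ln Xinf.
Proof.
  intros; unfold gompertz_traj, Rpower.
  rewrite ln_mult, !ln_exp by apply exp_pos; ring.
Qed.

Lemma discounted_sum_shift b (u : nat -> R) j :
  sum_f_R0 (fun k => exp (- b * (INR (S j) - INR k)) * u k) j
  = exp (- b) * sum_f_R0 (fun k => exp (- b * (INR j - INR k)) * u k) j.
Proof.
  rewrite scal_sum; apply sum_eq; intros k _.
  replace (- b * (INR (S j) - INR k)) with (- b * (INR j - INR k) + - b)
    by (rewrite S_INR; ring).
  rewrite exp_plus; ring.
Qed.

Lemma Yplus_gompertz alphaT betaT b Xinf X0 flow d i :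
  0 < alphaT -> 0 < Xinf -> 0 < X0 ->
  is_one_day_flow (gompertz_phi b Xinf) flow ->
  Yplus alphaT betaT X0 (growth_map alphaT flow) d i
  = ln (gompertz_traj b X0 Xinf (INR i)) / alphaT
    - sum_f_R0 (fun k => exp (- b * (INR i - INR k)) * BED_T alphaT betaT (d k)) i.
Proof.
  intros HalphaT HXinf HX0 Hflow; induction i as [|j IH].
  - simpl; rewrite ln_gompertz_traj by auto.
    rewrite Rminus_0_r, Rmult_0_r, exp_0; field; lra.
  - simpl Yplus; rewrite IH, (growth_map_gompertz _ b Xinf) by auto.
    rewrite tech5, discounted_sum_shift, !ln_gompertz_traj by auto.
    replace (- b * INR (S j)) with (- b * INR j + - b) by (rewrite S_INR; ring).
    replace (- b * (INR (S j) - INR (S j))) with 0 by ring.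
    rewrite exp_plus, exp_0; field; lra.
Qed.

Theorem mainTheorem6
  (alphaT betaT abO gamma c b Xinf X0 : R) (N : nat) (flow : R -> R -> R)
  (HalphaT : 0 < alphaT) (HbetaT : 0 < betaT) (HabO : 0 < abO)
  (Hgamma : 0 < gamma < 1) (Hc : 0 < c)
  (Hb : 0 < b) (HXinf : 0 < Xinf) (HX0 : 0 < X0) (HN : (1 <= N)%nat)
  (Hflow : is_one_day_flow (gompertz_phi b Xinf) flow) :
  (forall d : nat -> R, (forall k, (k < N)%nat -> 0 <= d k) ->
     forall i, (i < N)%nat ->
       Yplus alphaT betaT X0 (growth_map alphaT flow) d i =
       ln (gompertz_traj b X0 Xinf (INR i)) / alphaT
       - sum_f_R0 (fun k => exp (- b * (INR i - INR k)) * BED_T alphaT betaT (d k)) i)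
  /\
  (forall dstar : nat -> R, feasible N abO gamma c dstar ->
     ((forall d, feasible N abO gamma c d ->
         Yplus alphaT betaT X0 (growth_map alphaT flow) dstar (N - 1)
         <= Yplus alphaT betaT X0 (growth_map alphaT flow) d (N - 1))
      <->
      (forall d, feasible N abO gamma c d ->
         disc_BED b alphaT betaT N d <= disc_BED b alphaT betaT N dstar))).
Proof.
  split.
  - intros d _ i _; apply Yplus_gompertz; auto.
  - intros dstar _.
    assert (Hlast : forall d, Yplus alphaT betaT X0 (growth_map alphaT flow) d (N - 1)
      = ln (gompertz_traj b X0 Xinf (INR (N - 1))) / alphaT
        - disc_BED b alphaT betaT N d).
    { intro d; apply Yplus_gompertz; auto. }
    split; intros Hopt d Hd; specialize (Hopt d Hd); rewrite !Hlast in *; lra.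
Qed.
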